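(* Consider the action of $O(2)$ on $M_2(\mathbb{R})$ by conjugation. Each nontrivial irreducible $O(2)$-invariant cone of $M_2(\mathbb{R})$ is generated by exactly one of the following matrices: (0) $\begin{pmatrix}0&0\\0&0\end{pmatrix}$; (1) $I=\begin{pmatrix}1&0\\0&1\end{pmatrix}$; (2) $E=\begin{pmatrix}0&1\\-1&0\end{pmatrix}$; (3) $e_1=\begin{pmatrix}1&0\\0&-1\end{pmatrix}$; (4) $\begin{pmatrix}a+1&0\\0&a-1\end{pmatrix}$ with $a>0$; (5) $\begin{pmatrix}a+s&1\\-1&a-s\end{pmatrix}$ with $a,s\ge0$ and $(a,s)\neq(0,0)$.
   Context: $O(2)=\{P\in M_2(\mathbb{R}):PP^t=I\}$. A cone is a subset $C\subseteq M_2(\mathbb{R})$ closed under multiplication by nonzero scalars; an $O(2)$-invariant cone is a cone closed under conjugation $X\mapsto PXP^{-1}$ by all $P\in O(2)$; an irreducible $O(2)$-invariant cone is an $O(2)$-invariant cone not properly containing any $O(2)$-invariant cone. The irreducible invariant cones partition $M_2(\mathbb{R})$, and the cone generated by a matrix $X$ is the irreducible invariant cone containing $X$ (for $X\neq0$ this is $\{\lambda PXP^{-1}:\lambda\in\mathbb{R}\setminus\{0\},P\in O(2)\}$, and for $X=0$ it is $\{0\}$). *)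

From HB Require Import structures.
From mathcomp Require Import all_boot all_order all_algebra.
From mathcomp Require Import reals.
Set Implicit Arguments. Unset Strict Implicit. Unset Printing Implicit Defensive.
Import Order.TTheory GRing.Theory Num.Theory.
Local Open Scope ring_scope.

Section Defs.
Variable R : realType.

Definition mx2 (a b c d : R) : 'M[R]_2 :=
  \matrix_(i < 2, j < 2)
    if (i == 0 :> nat) then (if (j == 0 :> nat) then a else b)
    else (if (j == 0 :> nat) then c else d).

Definition O2 (P : 'M[R]_2) : Prop := P *m P^T = 1%:M.

Definition is_cone (C : 'M[R]_2 -> Prop) : Prop :=
  forall (l : R) (X : 'M[R]_2), l != 0 -> C X -> C (l *: X).

Definition invariant_cone (C : 'M[R]_2 -> Prop) : Prop :=
  is_cone C /\
  forall P X, O2 P -> C X -> C (P *m X *m invmx P).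

Definition irreducible_cone (C : 'M[R]_2 -> Prop) : Prop :=
  invariant_cone C /\ (exists X, C X) /\
  forall D : 'M[R]_2 -> Prop,
    invariant_cone D -> (exists X, D X) -> (forall X, D X -> C X) ->
    forall X, C X -> D X.

Definition gen_cone (X : 'M[R]_2) : 'M[R]_2 -> Prop :=
  fun Y => exists (l : R) (P : 'M[R]_2), l != 0 /\ O2 P /\ Y = l *: (P *m X *m invmx P).

Definition normal_form (X : 'M[R]_2) : Prop :=
  X = mx2 0 0 0 0 \/
  X = mx2 1 0 0 1 \/
  X = mx2 0 1 (-1) 0 \/
  X = mx2 1 0 0 (-1) \/
  (exists a : R, 0 < a /\ X = mx2 (a + 1) 0 0 (a - 1)) \/
  (exists a s : R, 0 <= a /\ 0 <= s /\ (a, s) != (0, 0) /\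
                   X = mx2 (a + s) 1 (-1) (a - s)).

End Defs.

(* Write X = a I + b E + p e_1 + q f_1 with f_1 = mx2 0 1 1 0.  Conjugating
   by a rotation fixes a and b and turns (p, q) by twice the angle, so X is
   conjugate to a I + b E + r e_1 with r = |(p, q)|.  Conjugating by
   diag(1, -1) or by the quarter turn flips the sign of b or of r, and scaling
   by -1 flips all three, so we may take a, b, r >= 0; a positive scaling then
   makes the first nonzero one among b, r, a equal to 1, which gives a normal
   form.  Along a cone the invariants tr X, tr X^2 and tr (X X^T) get
   multiplied by l, l^2, l^2, and this never relates two distinct normal
   forms.  Finally an irreducible cone is the cone generated by any of its
   elements. *)

From HB Require Import structures.
From mathcomp Require Import all_boot all_order all_algebra.
From mathcomp Require Import reals.
From mathcomp Require Import ring lra.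
Import Order.TTheory GRing.Theory Num.Theory.
Local Open Scope ring_scope.


Section Cones.
Context {R : realType}.
Implicit Types (a b c d p q r s l : R) (P X Y N : 'M[R]_2).

Local Ltac mx2_entries :=
  apply/matrixP => -[[|[|i]] ?] // -[[|[|j]] ?] //; rewrite !mxE /=.

Lemma mx2_eta X : X = mx2 (X 0 0) (X 0 1) (X 1 0) (X 1 1).
Proof. by mx2_entries; congr (X _ _); apply: val_inj. Qed.

Lemma mulmx2 a b c d a' b' c' d' :
  mx2 a b c d *m mx2 a' b' c' d' =
  mx2 (a * a' + b * c') (a * b' + b * d') (c * a' + d * c') (c * b' + d * d').
Proof. by mx2_entries; rewrite !big_ord_recr big_ord0 /= !mxE /= add0r. Qed.

Lemma trmx2 a b c d : (mx2 a b c d)^T = mx2 a c b d.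
Proof. by mx2_entries. Qed.

Lemma scalemx2 l a b c d : l *: mx2 a b c d = mx2 (l * a) (l * b) (l * c) (l * d).
Proof. by mx2_entries. Qed.

Lemma mx2_one : 1%:M = mx2 1 0 0 1 :> 'M[R]_2.
Proof. by mx2_entries. Qed.

Lemma mxtrace_mx2 a b c d : \tr (mx2 a b c d) = a + d.
Proof. by rewrite /mxtrace !big_ord_recr big_ord0 /= !mxE /= add0r. Qed.

Lemma O2_invmx P : O2 P -> invmx P = P^T.
Proof.
move=> OP; have [unitP _] := mulmx1_unit OP.
by rewrite -[invmx P]mulmx1 -OP mulmxA mulVmx // mul1mx.
Qed.

Lemma O2_mulmx P Q : O2 P -> O2 Q -> O2 (P *m Q).
Proof. by rewrite /O2 => OP OQ; rewrite trmx_mul mulmxA -(mulmxA P) OQ mulmx1. Qed.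

Lemma O2_1 : O2 (1%:M : 'M[R]_2).
Proof. by rewrite /O2 trmx1 mulmx1. Qed.

Lemma O2_mx2 a b c d :
  a * a + b * b = 1 -> c * c + d * d = 1 -> a * c + b * d = 0 -> O2 (mx2 a b c d).
Proof.
move=> rowa rowc orth; rewrite /O2 trmx2 mulmx2 mx2_one.
by congr mx2; rewrite // mulrC [d * b]mulrC.
Qed.

Lemma gen_cone_refl X : gen_cone X X.
Proof.
exists 1, 1%:M; split; first exact: oner_neq0.
by split; [exact: O2_1 | rewrite invmx1 mul1mx mulmx1 scale1r].
Qed.

Lemma gen_cone_trans {X Y Z} : gen_cone X Y -> gen_cone Y Z -> gen_cone X Z.
Proof.
move=> [l [P [l0 [OP ->]]]] [m [Q [m0 [OQ ->]]]].
exists (m * l), (Q *m P); split; first by rewrite mulf_neq0.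
split; first exact: O2_mulmx.
rewrite !O2_invmx //; last exact: O2_mulmx.
by rewrite trmx_mul -!scalemxAr -!scalemxAl scalerA !mulmxA.
Qed.

Lemma gen_cone_conj {P} X : O2 P -> gen_cone X (P *m X *m P^T).
Proof. by move=> OP; exists 1, P; rewrite scale1r O2_invmx // oner_neq0. Qed.

Lemma gen_cone_scale {l} X : l != 0 -> gen_cone X (l *: X).
Proof.
by move=> l0; exists l, 1%:M; rewrite invmx1 mul1mx mulmx1; split => //; split; first exact: O2_1.
Qed.

Lemma gen_cone_invariant_cone X : invariant_cone (gen_cone X).
Proof.
split=> [l Y l0 XY | P Y OP XY]; apply: gen_cone_trans XY _.
  exact: gen_cone_scale.
by rewrite O2_invmx //; apply: gen_cone_conj.
Qed.

Lemma invariant_cone_gen_cone {C X Y} :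
  invariant_cone C -> C X -> gen_cone X Y -> C Y.
Proof. by move=> [scaleC conjC] CX [l [P [l0 [OP ->]]]]; apply/scaleC/conjC. Qed.

Lemma irreducible_cone_gen_cone C X :
  irreducible_cone C -> C X -> forall Y, gen_cone X Y <-> C Y.
Proof.
move=> [invC [_ minC]] CX Y; split; first exact: invariant_cone_gen_cone.
apply: minC; first exact: gen_cone_invariant_cone.
  by exists X; apply: gen_cone_refl.
by move=> Z; apply: invariant_cone_gen_cone.
Qed.

Lemma gen_cone_mxtrace X Y : gen_cone X Y ->
  exists2 l, l != 0 & [/\ \tr Y = l * \tr X,
    \tr (Y *m Y) = l ^+ 2 * \tr (X *m X) &
    \tr (Y *m Y^T) = l ^+ 2 * \tr (X *m X^T)].
Proof.
move=> [l [P [l0 [OP ->]]]]; exists l => //.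
have PtP : P^T *m P = 1%:M by apply: mulmx1C.
have conj_tr Z : \tr (P *m Z *m P^T) = \tr Z.
  by rewrite mxtrace_mulC mulmxA PtP mul1mx.
have conj_mul Z W : P *m Z *m P^T *m (P *m W *m P^T) = P *m (Z *m W) *m P^T.
  by rewrite !mulmxA -(mulmxA _ P^T P) PtP mulmx1.
have conj_tr_mx Z : (P *m Z *m P^T)^T = P *m Z^T *m P^T.
  by rewrite !trmx_mul trmxK mulmxA.
rewrite O2_invmx //; split; first by rewrite mxtraceZ conj_tr.
  by rewrite -scalemxAl -scalemxAr scalerA mxtraceZ conj_mul conj_tr expr2.
by rewrite linearZ /= -scalemxAl -scalemxAr scalerA mxtraceZ conj_tr_mx conj_mul conj_tr expr2.
Qed.

Lemma gen_cone_mx2_invariants a b c d a' b' c' d' :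
  gen_cone (mx2 a b c d) (mx2 a' b' c' d') ->
  exists2 l, l != 0 & [/\ a' + d' = l * (a + d),
    a' * a' + 2 * b' * c' + d' * d' = l ^+ 2 * (a * a + 2 * b * c + d * d) &
    a' * a' + b' * b' + c' * c' + d' * d' = l ^+ 2 * (a * a + b * b + c * c + d * d)].
Proof.
move/gen_cone_mxtrace => [l l0 []]; rewrite !trmx2 !mulmx2 !mxtrace_mx2 => tr trsq trnorm.
by exists l => //; split=> //; [move: trsq | move: trnorm]; congr (_ = _); ring.
Qed.

Lemma pair_neq0_addr_gt0 {a s} : 0 <= a -> 0 <= s -> (a, s) != (0, 0) -> 0 < a + s.
Proof. by move=> a0 s0 as0; rewrite lt0r addr_ge0 // andbT paddr_eq0. Qed.

Lemma normal_form_gen_cone_eq N N' :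
  normal_form N -> normal_form N' -> gen_cone N N' -> N' = N.
Proof.
(* The invariants separate distinct normal forms; within families (4) and (5)
   they force l ^+ 2 = 1, and l = -1 is excluded by the signs of a and s. *)
case=> [->|[->|[->|[->|[[a [a0 ->]]|
  [a [s [a0 [s0 [/(pair_neq0_addr_gt0 a0 s0) as0 ->]]]]]]]]]];
case=> [->|[->|[->|[->|[[a' [a'0 ->]]|
  [a' [s' [a'0 [s'0 [/(pair_neq0_addr_gt0 a'0 s'0) as'0 ->]]]]]]]]]];
move/gen_cone_mx2_invariants => [l l0 [tr sq nrm]] //;
have l2 : 0 < l ^+ 2 by rewrite exprn_even_gt0 // l0 orbT.
all: try by exfalso; nra.
all: have /eqP : l ^+ 2 = 1 by nra.
all: rewrite sqrf_eq1 => /orP[] /eqP l1; subst l; congr mx2; nra.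
Qed.

Lemma unit_circle_half_angle {C S} : C ^+ 2 + S ^+ 2 = 1 ->
  exists c s, [/\ c ^+ 2 + s ^+ 2 = 1, c ^+ 2 - s ^+ 2 = C & 2 * c * s = S].
Proof.
move=> CS; have [C_1 | C_neq] := eqVneq C (-1).
  have S0 : S = 0 by rewrite C_1 in CS; nra.
  by exists 0, 1; split; rewrite ?C_1 ?S0; ring.
have C_gt : -1 < C by rewrite lt_neqAle eq_sym C_neq /=; nra.
pose c := Num.sqrt ((1 + C) / 2).
have c2 : c ^+ 2 = (1 + C) / 2 by rewrite sqr_sqrtr //; lra.
have c0 : c != 0 by apply/eqP => c0; rewrite c0 in c2; lra.
have S2 : S ^+ 2 = 1 - C ^+ 2 by lra.
exists c, (S / (2 * c)); split; last by field.
  by rewrite expr_div_n exprMn S2 c2; field; lra.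
by rewrite expr_div_n exprMn S2 c2; field; lra.
Qed.

Definition rot c s : 'M[R]_2 := mx2 c (- s) s c.

Lemma O2_rot {c s} : c ^+ 2 + s ^+ 2 = 1 -> O2 (rot c s).
Proof. by move=> cs; apply: O2_mx2; nra. Qed.

(* a I + b E + p e_1 + q f_1, with f_1 = mx2 0 1 1 0 *)
Definition coordmx a b p q : 'M[R]_2 := mx2 (a + p) (q + b) (q - b) (a - p).

Lemma coordmx_surj X : exists a b p q, X = coordmx a b p q.
Proof.
exists ((X 0 0 + X 1 1) / 2), ((X 0 1 - X 1 0) / 2), ((X 0 0 - X 1 1) / 2), ((X 0 1 + X 1 0) / 2).
by rewrite {1}[X]mx2_eta; congr mx2; field.
Qed.

(* Homogeneous in (c, s), hence a plain ring identity. *)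
Lemma rot_conj_coordmx c s a b p q :
  rot c s *m coordmx a b p q *m (rot c s)^T =
  coordmx ((c ^+ 2 + s ^+ 2) * a) ((c ^+ 2 + s ^+ 2) * b)
          ((c ^+ 2 - s ^+ 2) * p - 2 * c * s * q) (2 * c * s * p + (c ^+ 2 - s ^+ 2) * q).
Proof. by rewrite trmx2 !mulmx2; congr mx2; ring. Qed.

Lemma gen_cone_coordmx_rot {c s} a b p q : c ^+ 2 + s ^+ 2 = 1 ->
  gen_cone (coordmx a b p q) (coordmx a b ((c ^+ 2 - s ^+ 2) * p - 2 * c * s * q)
                                         (2 * c * s * p + (c ^+ 2 - s ^+ 2) * q)).
Proof.
move=> cs; have := gen_cone_conj (coordmx a b p q) (O2_rot cs).
by rewrite rot_conj_coordmx cs !mul1r.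
Qed.

Lemma gen_cone_coordmx_scale {l} a b p q : l != 0 ->
  gen_cone (coordmx a b p q) (coordmx (l * a) (l * b) (l * p) (l * q)).
Proof.
by move=> l0; have := gen_cone_scale (coordmx a b p q) l0; rewrite scalemx2; congr (gen_cone _ _);
  congr mx2; ring.
Qed.

Lemma gen_cone_coordmx_diag a b p q : exists r, gen_cone (coordmx a b p q) (coordmx a b r 0).
Proof.
pose r := Num.sqrt (p ^+ 2 + q ^+ 2).
have r2 : r ^+ 2 = p ^+ 2 + q ^+ 2 by rewrite sqr_sqrtr // addr_ge0 // sqr_ge0.
have [C [S [CS pE qE]]] : exists C S, [/\ C ^+ 2 + S ^+ 2 = 1, p = r * C & q = - (r * S)].
  have [r0 | r_neq0] := eqVneq r 0.
    by exists 1, 0; rewrite r0 in r2 *; split; [ring | nra | nra].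
  by exists (p / r), (- q / r); split; [rewrite !expr_div_n sqrrN -mulrDl -r2 divff ?expf_neq0
    | field | field].
have [c [s [cs CE SE]]] := unit_circle_half_angle CS.
exists r; have := gen_cone_coordmx_rot a b p q cs.
rewrite CE SE pE qE; congr (gen_cone _ (coordmx _ _ _ _)); last by ring.
by rewrite -[RHS]mulr1 -CS; ring.
Qed.

Lemma gen_cone_coordmx_oppb a b r : gen_cone (coordmx a b r 0) (coordmx a (- b) r 0).
Proof.
have refl : O2 (mx2 1 0 0 (-1) : 'M[R]_2) by apply: O2_mx2; ring.
by have := gen_cone_conj (coordmx a b r 0) refl; rewrite trmx2 !mulmx2; congr (gen_cone _ _);
  congr mx2; ring.
Qed.

Lemma gen_cone_coordmx_oppr a b r : gen_cone (coordmx a b r 0) (coordmx a b (- r) 0).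
Proof.
have cs : 0 ^+ 2 + 1 ^+ 2 = 1 :> R by ring.
by have := gen_cone_coordmx_rot a b r 0 cs; congr (gen_cone _ (coordmx _ _ _ _)); ring.
Qed.

Lemma gen_cone_coordmx_normr a b r :
  gen_cone (coordmx a b r 0) (coordmx `|a| `|b| `|r| 0).
Proof.
have abs_br a' b' r' : gen_cone (coordmx a' b' r' 0) (coordmx a' `|b'| `|r'| 0).
  apply: (gen_cone_trans (Y := coordmx a' `|b'| r' 0)).
    by case: (ger0P b') => _; [exact: gen_cone_refl | exact: gen_cone_coordmx_oppb].
  by case: (ger0P r') => _; [exact: gen_cone_refl | exact: gen_cone_coordmx_oppr].
case: (ger0P a) => _; first exact: abs_br.
have N10 : -1 != 0 :> R by rewrite oppr_eq0 oner_eq0.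
apply: gen_cone_trans (gen_cone_coordmx_scale a b r 0 N10) _.
by rewrite !mulN1r oppr0 -(normrN b) -(normrN r); apply: abs_br.
Qed.

Lemma normal_form_coordmx_skew a s : 0 <= a -> 0 <= s -> normal_form (coordmx a 1 s 0).
Proof.
move=> a0 s0; rewrite /coordmx add0r sub0r.
have [[-> ->] | as0] := eqVneq (a, s) (0, 0).
  by right; right; left; rewrite addr0 subr0.
by right; right; right; right; right; exists a, s.
Qed.

Lemma normal_form_coordmx_sym a : 0 <= a -> normal_form (coordmx a 0 1 0).
Proof.
rewrite le_eqVlt => /orP[/eqP <- | a0]; rewrite /coordmx subr0 addr0.
  by right; right; right; left; rewrite add0r sub0r.
by right; right; right; right; left; exists a.
Qed.

Lemma gen_cone_coordmx_normal_form {a b r} : 0 <= a -> 0 <= b -> 0 <= r ->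
  exists2 N, normal_form N & gen_cone (coordmx a b r 0) N.
Proof.
move=> a0 b0 r0.
have normalize x a' b' r' : 0 < x ->
    gen_cone (coordmx a' b' r' 0) (coordmx (x^-1 * a') (x^-1 * b') (x^-1 * r') 0).
  move=> x0; have x'0 : x^-1 != 0 by rewrite invr_eq0 gt_eqF.
  by have := gen_cone_coordmx_scale a' b' r' 0 x'0; rewrite mulr0.
have inv_ge0 x y : 0 < x -> 0 <= y -> 0 <= x^-1 * y.
  by move=> x0 y0; rewrite mulr_ge0 // invr_ge0 ltW.
have [b_gt0 | b_le0] := ltrP 0 b.
  exists (coordmx (b^-1 * a) 1 (b^-1 * r) 0).
    by apply: normal_form_coordmx_skew; apply: inv_ge0.
  by have := normalize b a b r b_gt0; rewrite mulVf ?gt_eqF.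
have -> : b = 0 by apply/le_anti/andP.
have [r_gt0 | r_le0] := ltrP 0 r.
  exists (coordmx (r^-1 * a) 0 1 0); first by apply/normal_form_coordmx_sym/inv_ge0.
  by have := normalize r a 0 r r_gt0; rewrite mulVf ?gt_eqF // mulr0.
have -> : r = 0 by apply/le_anti/andP.
have [a_gt0 | a_le0] := ltrP 0 a.
  exists (coordmx 1 0 0 0); first by right; left; rewrite /coordmx; congr mx2; ring.
  by have := normalize a a 0 0 a_gt0; rewrite mulVf ?gt_eqF // mulr0.
have -> : a = 0 by apply/le_anti/andP.
by exists (coordmx 0 0 0 0); [left; rewrite /coordmx; congr mx2; ring | exact: gen_cone_refl].
Qed.

Lemma gen_cone_normal_form X : exists2 N, normal_form N & gen_cone X N.
Proof.
have [a [b [p [q ->]]]] := coordmx_surj X.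
have [r Xr] := gen_cone_coordmx_diag a b p q.
have [N nfN absN] := gen_cone_coordmx_normal_form (normr_ge0 a) (normr_ge0 b) (normr_ge0 r).
by exists N => //; apply: gen_cone_trans Xr (gen_cone_trans (gen_cone_coordmx_normr _ _ _) absN).
Qed.

End Cones.

Theorem mainTheorem10 (R : realType) (C : 'M[R]_2 -> Prop) :
  irreducible_cone C ->
  exists! X : 'M[R]_2, normal_form X /\ (forall Y, gen_cone X Y <-> C Y).
Proof.
move=> irrC; have [invC [[X CX] _]] := irrC.
have [N nfN XN] := gen_cone_normal_form X.
have CN : C N := invariant_cone_gen_cone invC CX XN.
exists N; split; first by split=> //; apply: irreducible_cone_gen_cone.
move=> N' [nfN' N'C]; apply: normal_form_gen_cone_eq nfN' nfN _.
by apply/N'C.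
Qed.
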